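(* Let $n\ge 4$, $\lambda=\frac{n-1}{2(n-2)}$, and consider $V_2\mathbb R^n=\mathrm{SO}(n)/\mathrm{SO}(n-2)$ with the decomposition $\mathfrak m=\mathfrak m_{12}\oplus\mathfrak m_{13}\oplus\mathfrak m_{23}$, $\mathfrak m_{12}=\mathbb R\xi_{12}$, $\mathfrak m_{13}=\mathrm{span}\{\xi_{1k}:3\le k\le n\}$, $\mathfrak m_{23}=\mathrm{span}\{\xi_{2k}:3\le k\le n\}$, and the (Einstein) metric $\Lambda=\mathrm{Id}_{\mathfrak m_{12}}+\lambda\,\mathrm{Id}_{\mathfrak m_{13}}+\lambda\,\mathrm{Id}_{\mathfrak m_{23}}$. A nonzero vector $X=a_{12}\xi_{12}+\sum_{k=3}^n(a_{1k}\xi_{1k}+a_{2k}\xi_{2k})$ satisfies $[X,\Lambda X]_{\mathfrak m}=0$ (i.e. $t\mapsto\exp(tX)\cdot o$ is a geodesic of this metric) if and only if either $a_{12}=0$ (i.e. $X\in\mathfrak m_{13}\oplus\mathfrak m_{23}$) or $X\in\mathbb R\xi_{12}$.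
   Context: $E_{ab}$ is the $n\times n$ matrix with $1$ in entry $(a,b)$ and $0$ elsewhere; $\xi_{ab}=E_{ab}-E_{ba}$; $\mathrm{SO}(n-2)$ acts on the last $n-2$ coordinates. $\mathfrak m$ is the orthogonal complement of $\mathfrak{so}(n-2)$ in $\mathfrak{so}(n)$ with respect to the negative of the Killing form $B$; the metric is $\langle X,Y\rangle=B(\Lambda X,Y)$; $[\cdot,\cdot]_{\mathfrak m}$ is the $\mathfrak m$-component of the bracket. *)

From HB Require Import structures.
From mathcomp Require Import all_boot all_order all_algebra.
Set Implicit Arguments. Unset Strict Implicit. Unset Printing Implicit Defensive.
Import Order.TTheory GRing.Theory Num.Theory.
Local Open Scope ring_scope.

(* Indices are 0-based: paper's index a corresponds to a.-1 here, so the
   paper's xi_{12} is [xi 0 1] and SO(n-2) acts on indices 2..n-1. *)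

Definition xi {R : ringType} (n a b : nat) : 'M[R]_n :=
  \matrix_(i, j) ((((i == a :> nat) && (j == b :> nat)))%:R
                  - (((i == b :> nat) && (j == a :> nat)))%:R).

Definition lieb {R : ringType} (n : nat) (X Y : 'M[R]_n) : 'M[R]_n :=
  X *m Y - Y *m X.

(* m-component: orthogonal projection (w.r.t. -Killing form, i.e. up to a
   positive factor the trace form -tr(XY)) of so(n) onto the complement m of
   so(n-2) (the lower-right block on indices >= 2): zero out that block. *)
Definition proj_m {R : ringType} (n : nat) (Y : 'M[R]_n) : 'M[R]_n :=
  \matrix_(i, j) (if (2 <= i)%N && (2 <= j)%N then 0 else Y i j).

Definition lam {R : fieldType} (n : nat) : R := (n.-1)%:R / (2 * (n - 2)%:R).

(* The metric endomorphism Lambda = Id on m12 + l Id on m13 + l Id on m23,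
   acting on m (entries of the so(n-2) block are sent to 0). *)
Definition Lam {R : ringType} (n : nat) (l : R) (X : 'M[R]_n) : 'M[R]_n :=
  \matrix_(i, j)
    (if (i < 2)%N && (j < 2)%N then X i j
     else if (i < 2)%N || (j < 2)%N then l * X i j
     else 0).

Definition mvec {R : ringType} (n : nat) (a12 : R) (a1 a2 : nat -> R)
  : 'M[R]_n :=
  a12 *: xi n 0 1 + \sum_(2 <= k < n) (a1 k *: xi n 0 k + a2 k *: xi n 1 k).

From HB Require Import structures.
From mathcomp Require Import all_boot all_order all_algebra.
From mathcomp Require Import zify ring.
Set Implicit Arguments. Unset Strict Implicit.
Import Order.TTheory GRing.Theory Num.Theory.
Local Open Scope ring_scope.

(* Write X = a12 xi12 + A, where A = sum_k (a1k xi1k + a2k xi2k) lies in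
   m13 + m23. Since Lambda is linear, Lambda X = a12 xi12 + lambda A, and
   the bracket, being bilinear and alternating, gives
       [X, Lambda X] = a12 (lambda - 1) [xi12, A].
   From [xi_ab, xi_cd] = d_bc xi_ad - d_bd xi_ac - d_ac xi_bd + d_ad xi_bc we
   get [xi12, A] = sum_k (a2k xi1k - a1k xi2k), which again lies in
   m13 + m23, so the m-projection is the identity on it. As lambda <> 1 for
   n >= 4, X is geodesic iff a12 = 0 or all a1k, a2k vanish, i.e. A = 0,
   i.e. X is a multiple of xi12 (because m12 meets m13 + m23 trivially). *)

Definition mperp {R : nzRingType} (n : nat) (b1 b2 : nat -> R) : 'M[R]_n :=
  \sum_(2 <= k < n) (b1 k *: xi n 0 k + b2 k *: xi n 1 k).

Section LinearMaps.
Variables (R : comNzRingType) (n : nat).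

Lemma lieb_is_linear (X : 'M[R]_n) : linear (lieb X).
Proof.
move=> c Y Z; rewrite /lieb mulmxDr mulmxDl -scalemxAr -scalemxAl scalerBr.
by rewrite opprD addrACA.
Qed.
HB.instance Definition _ (X : 'M[R]_n) :=
  GRing.isLinear.Build R 'M[R]_n 'M[R]_n _ (lieb X) (lieb_is_linear X).

Lemma Lam_is_linear (l : R) : linear (@Lam R n l).
Proof.
move=> c X Y; apply/matrixP => i j; rewrite !mxE.
case: ifP => _ //; case: ifP => _; last by rewrite mulr0 addr0.
by rewrite mulrDr mulrCA.
Qed.
HB.instance Definition _ (l : R) :=
  GRing.isLinear.Build R 'M[R]_n 'M[R]_n _ (@Lam R n l) (Lam_is_linear l).

Lemma proj_m_is_linear : linear (@proj_m R n).
Proof.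
move=> c X Y; apply/matrixP => i j; rewrite !mxE.
by case: ifP => _; rewrite ?mulr0 ?addr0.
Qed.
HB.instance Definition _ :=
  GRing.isLinear.Build R 'M[R]_n 'M[R]_n _ (@proj_m R n) proj_m_is_linear.

(* Bilinearity and [U, U] = [V, V] = 0 reduce [aU + V, aU + lV] to [U, V]. *)
Lemma lieb_split (a l : R) (U V : 'M[R]_n) :
  lieb (a *: U + V) (a *: U + l *: V) = (a * (l - 1)) *: lieb U V.
Proof.
rewrite /lieb !(mulmxDl, mulmxDr) -!(scalemxAl, scalemxAr) !scalerA.
move: (U *m U) (U *m V) (V *m U) (V *m V) => UU UV VU VV.
by apply/matrixP => i j; rewrite !mxE; ring.
Qed.

End LinearMaps.

Section BasisVectors.
Variables (R : comNzRingType) (n : nat).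

Lemma xi_delta (a b : 'I_n) : xi n a b = delta_mx a b - delta_mx b a :> 'M[R]_n.
Proof. by apply/matrixP => i j; rewrite !mxE. Qed.

Lemma lieb_xi (a b c d : 'I_n) :
  lieb (xi n a b) (xi n c d) =
    xi n a d *+ (b == c) - xi n a c *+ (b == d)
    - xi n b d *+ (a == c) + xi n b c *+ (a == d) :> 'M[R]_n.
Proof.
rewrite /lieb !xi_delta !(mulmxBl, mulmxBr) !mul_delta_mx_cond.
apply/matrixP => i j; rewrite !(mulmxnE, mxE).
by rewrite [d == a]eq_sym [c == a]eq_sym [d == b]eq_sym [c == b]eq_sym; ring.
Qed.

Section TwoFirstIndices.
Hypothesis n_gt1 : (1 < n)%N.
Let i0 : 'I_n := Ordinal (ltnW n_gt1).
Let i1 : 'I_n := Ordinal n_gt1.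

Lemma lieb_xi01_0k k :
  (2 <= k < n)%N -> lieb (xi n 0 1) (xi n 0 k) = - xi n 1 k :> 'M[R]_n.
Proof.
case/andP => k2 kn; have := lieb_xi i0 i1 i0 (Ordinal kn).
rewrite /= !eqE /= (ltn_eqF k2) (ltn_eqF (ltnW k2)).
by rewrite !(mulr0n, mulr1n, subr0, sub0r, addr0).
Qed.

Lemma lieb_xi01_1k k :
  (2 <= k < n)%N -> lieb (xi n 0 1) (xi n 1 k) = xi n 0 k :> 'M[R]_n.
Proof.
case/andP => k2 kn; have := lieb_xi i0 i1 i1 (Ordinal kn).
rewrite /= !eqE /= (ltn_eqF k2) (ltn_eqF (ltnW k2)).
by rewrite !(mulr0n, mulr1n, subr0, addr0).
Qed.

End TwoFirstIndices.

Lemma Lam_xi01 (l : R) : Lam l (xi n 0 1) = xi n 0 1 :> 'M[R]_n.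
Proof.
apply/matrixP => i j; rewrite !mxE.
by case: i j => [[|[|i]] hi] [[|[|j]] hj]; rewrite /= ?(subrr, mulr0).
Qed.

Lemma Lam_xi_mixed (l : R) a k :
  (a < 2 <= k)%N -> Lam l (xi n a k) = l *: xi n a k :> 'M[R]_n.
Proof.
case/andP=> a2 k2; apply/matrixP => i j; rewrite !mxE.
case: (ltnP i 2) => hi; case: (ltnP j 2) => hj //=.
  rewrite (ltn_eqF (leq_trans hj k2)) (ltn_eqF (leq_trans hi k2)).
  by rewrite !andbF subrr mulr0.
rewrite (gtn_eqF (leq_trans a2 hi)) (gtn_eqF (leq_trans a2 hj)).
by rewrite !andbF subrr mulr0.
Qed.

Lemma proj_m_xi a b : (a < 2)%N -> proj_m (xi n a b) = xi n a b :> 'M[R]_n.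
Proof.
move=> a2; apply/matrixP => i j; rewrite !mxE; case: ifP => // /andP[hi hj].
by rewrite (gtn_eqF (leq_trans a2 hi)) (gtn_eqF (leq_trans a2 hj)) !andbF subrr.
Qed.

End BasisVectors.

Section PerpComponent.
Variables (R : comNzRingType) (n : nat).

Lemma mvec_split (a12 : R) (b1 b2 : nat -> R) :
  mvec n a12 b1 b2 = a12 *: xi n 0 1 + mperp n b1 b2.
Proof. by []. Qed.

Lemma mperpE (b1 b2 : nat -> R) (i j : 'I_n) : (i < 2 <= j)%N ->
  mperp n b1 b2 i j = if i == 0 :> nat then b1 j else b2 j.
Proof.
case/andP=> i2 j2; rewrite summxE.
rewrite (bigD1_seq (nat_of_ord j)) /=
  ?mem_index_iota ?j2 ?ltn_ord ?iota_uniq //.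
rewrite big1_seq ?addr0; last first.
  move=> k /andP[kj]; rewrite mem_index_iota => /andP[k2 _].
  have jk : (j == k :> nat) = false by rewrite eq_sym (negbTE kj).
  rewrite !mxE jk (ltn_eqF (leq_trans i2 k2)) !andbF.
  by rewrite subrr !mulr0 addr0.
rewrite !mxE eqxx (ltn_eqF (leq_trans i2 j2)) (gtn_eqF j2) (gtn_eqF (ltnW j2)).
by case: i i2 => [[|[|i]] hi] //= _; rewrite !subr0 mulr0 mulr1 ?addr0 ?add0r.
Qed.

Hypothesis n_gt1 : (1 < n)%N.

Lemma mperp_eq0 (b1 b2 : nat -> R) :
  mperp n b1 b2 = 0 <-> forall k, (2 <= k < n)%N -> b1 k = 0 /\ b2 k = 0.
Proof.
split=> [M0 k /andP[k2 kn] | b0].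
  have e0 := mperpE b1 b2 (i := Ordinal (ltnW n_gt1)) (j := Ordinal kn).
  have e1 := mperpE b1 b2 (i := Ordinal n_gt1) (j := Ordinal kn).
  by rewrite M0 !mxE /= in e0 e1; rewrite -e0 // -e1.
rewrite /mperp big1_seq // => k /andP[_]; rewrite mem_index_iota => /b0[-> ->].
by rewrite !scale0r addr0.
Qed.

Lemma mperp_rot_eq0 (b1 b2 : nat -> R) :
  mperp n b2 (fun k => - b1 k) = 0 <-> mperp n b1 b2 = 0.
Proof.
rewrite !mperp_eq0; split=> b0 k /b0[h1 h2]; split => //.
  by apply/eqP; rewrite -oppr_eq0 h2.
by rewrite h1 oppr0.
Qed.

Lemma mperp_m12 (b1 b2 : nat -> R) (c : R) :
  mperp n b1 b2 = c *: xi n 0 1 -> mperp n b1 b2 = 0.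
Proof.
move=> Mc; apply/mperp_eq0 => k /andP[k2 kn].
have e0 := mperpE b1 b2 (i := Ordinal (ltnW n_gt1)) (j := Ordinal kn).
have e1 := mperpE b1 b2 (i := Ordinal n_gt1) (j := Ordinal kn).
rewrite Mc !mxE /= (gtn_eqF k2) (gtn_eqF (ltnW k2)) in e0 e1.
rewrite !(mulr0n, subr0, sub0r, oppr0, mulr0) in e0 e1.
by rewrite -e0 // -e1.
Qed.

Lemma Lam_mperp (l : R) (b1 b2 : nat -> R) :
  Lam l (mperp n b1 b2) = l *: mperp n b1 b2.
Proof.
rewrite linear_sum scaler_sumr; apply: eq_big_nat => k /andP[k2 _].
rewrite linearD !linearZ /= !Lam_xi_mixed ?k2 // scalerDr !scalerA.
by rewrite (mulrC l (b1 k)) (mulrC l (b2 k)).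
Qed.

Lemma proj_m_mperp (b1 b2 : nat -> R) : proj_m (mperp n b1 b2) = mperp n b1 b2.
Proof.
rewrite linear_sum; apply: eq_bigr => k _.
by rewrite linearD !linearZ /= !proj_m_xi.
Qed.

Lemma lieb_xi01_mperp (b1 b2 : nat -> R) :
  lieb (xi n 0 1) (mperp n b1 b2) = mperp n b2 (fun k => - b1 k).
Proof.
rewrite linear_sum; apply: eq_big_nat => k k_range.
rewrite linearD !linearZ /= lieb_xi01_0k ?lieb_xi01_1k //.
by rewrite scalerN scaleNr addrC.
Qed.

Lemma geodesic_bracket (l a12 : R) (a1 a2 : nat -> R) :
  let X := mvec n a12 a1 a2 in
  proj_m (lieb X (Lam l X)) = (a12 * (l - 1)) *: mperp n a2 (fun k => - a1 k).
Proof.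
rewrite /= mvec_split.
have -> : Lam l (a12 *: xi n 0 1 + mperp n a1 a2) =
           a12 *: xi n 0 1 + l *: mperp n a1 a2.
  by rewrite linearD linearZ /= Lam_xi01 Lam_mperp.
by rewrite lieb_split lieb_xi01_mperp linearZ /= proj_m_mperp.
Qed.

Lemma mvec_in_m12 (a12 : R) (a1 a2 : nat -> R) :
  (exists c : R, mvec n a12 a1 a2 = c *: xi n 0 1) <-> mperp n a1 a2 = 0.
Proof.
split=> [[c Xc] | M0]; last by exists a12; rewrite mvec_split M0 addr0.
apply: (@mperp_m12 _ _ (c - a12)).
by rewrite scalerBl -Xc mvec_split addrC addKr.
Qed.

End PerpComponent.

(* The Einstein parameter differs from 1: lambda = 1 would force n = 3. *)
Lemma lam_neq1 (R : numFieldType) n : (4 <= n)%N -> lam n != 1 :> R.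
Proof.
move=> hn; apply/eqP => h.
have hd : (2 * (n - 2)%:R : R) != 0.
  by rewrite mulf_neq0 // pnatr_eq0; apply/eqP; lia.
have : (n.-1)%:R = (2 * (n - 2)%:R : R).
  by rewrite -(divfK hd (n.-1)%:R) -/(lam n) h mul1r.
by rewrite -natrM => /eqP; rewrite eqr_nat => /eqP; lia.
Qed.

Theorem mainTheorem4 (R : realFieldType) (n : nat) (hn : (4 <= n)%N)
    (a12 : R) (a1 a2 : nat -> R) :
  let X : 'M[R]_n := mvec n a12 a1 a2 in
  X != 0 ->
  (proj_m (lieb X (Lam (lam n) X)) = 0 <->
   (a12 = 0 \/ exists c : R, X = c *: xi n 0 1)).
Proof.
move=> X _; have n_gt1 : (1 < n)%N by apply: leq_trans hn.
have l1 : lam n - 1 != 0 :> R by rewrite subr_eq0 lam_neq1.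
rewrite geodesic_bracket //; split=> [/eqP | [-> | Xc]].
- rewrite scaler_eq0 mulf_eq0 (negbTE l1) orbF.
  case/orP => [/eqP | /eqP M0]; first by left.
  by right; apply/(mvec_in_m12 n_gt1)/(mperp_rot_eq0 n_gt1).
- by rewrite mul0r scale0r.
- by move/(mvec_in_m12 n_gt1)/(mperp_rot_eq0 n_gt1): Xc => ->; rewrite scaler0.
Qed.
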